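(* Let $X^*\subset\mathbb{R}^n$ be a finite set of points and let $X\subset\mathbb{R}^n$ be obtained by perturbing $X^*$, so that each $\boldsymbol x\in X$ has a corresponding unperturbed point $\boldsymbol x^*\in X^*$ (with $g(X)$ and $g(X^* )$ listing values in corresponding order). Let $g\in\mathbb{R}[x_1,\ldots,x_n]$ be gradient-normalized with respect to $X$, i.e. $\|\mathfrak n_{\mathrm g}(g;X)\|=1$. Let $\delta=\max_{\boldsymbol x\in X}\|\boldsymbol x^*-\boldsymbol x\|$. Then $\|g(X)-g(X^* )\|\le\delta+o(\delta)$, where $o(\cdot)$ is Landau's little-o (as $\delta\to0$).
   Context: For a finite point set $Y=\{\boldsymbol y_1,\ldots,\boldsymbol y_N\}$ and a polynomial $h$, $h(Y)=(h(\boldsymbol y_1),\ldots,h(\boldsymbol y_N))^\top$. $\mathfrak n_{\mathrm g}(g;X)=\mathrm{vec}(\nabla g(X))\in\mathbb{R}^{|X|n}$, where $\nabla g(X)$ is the $|X|\times n$ matrix whose rows are the gradients of $g$ at the points of $X$; thus $\|\mathfrak n_{\mathrm g}(g;X)\|^2=\sum_{\boldsymbol x\in X}\|\nabla g(\boldsymbol x)\|^2$. Norms are Euclidean. *)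

From HB Require Import structures.
From mathcomp Require Import all_boot all_order all_algebra.
From mathcomp Require Import reals.
From mathcomp Require Import mpoly.
Set Implicit Arguments. Unset Strict Implicit. Unset Printing Implicit Defensive.
Import Order.TTheory GRing.Theory Num.Theory.
Local Open Scope ring_scope.

(* Points of R^n are functions 'I_n -> R; finite point sets of size N are
   indexed families 'I_N -> ('I_n -> R), so that X i and Xs i correspond. *)

Definition enorm (R : rcfType) (n : nat) (v : 'I_n -> R) : R :=
  Num.sqrt (\sum_(j < n) v j ^+ 2).

Definition evalpts (R : realType) (n N : nat) (h : {mpoly R[n]})
  (Y : 'I_N -> 'I_n -> R) : 'I_N -> R := fun i => h.@[Y i].

(* gradient of g at x (formal partial derivatives = gradient for polynomials) *)
Definition gradp (R : realType) (n : nat) (g : {mpoly R[n]}) (x : 'I_n -> R)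
  : 'I_n -> R := fun j => (g^`M(j)).@[x].

Definition ngnorm (R : realType) (n N : nat) (g : {mpoly R[n]})
  (X : 'I_N -> 'I_n -> R) : R :=
  Num.sqrt (\sum_(i < N) \sum_(j < n) gradp g (X i) j ^+ 2).

(* delta = max_{x in X} || x* - x ||  (0 if X is empty) *)
Definition pert (R : realType) (n N : nat) (X Xs : 'I_N -> 'I_n -> R) : R :=
  \big[Num.max/0]_(i < N) enorm (fun j => Xs i j - X i j).

(* Within sup-distance d <= 1 of a point x, a polynomial differs from its
   first-order Taylor expansion at x by O(d^2): the remainder is additive,
   vanishes on constants and variables, and obeys a Leibniz rule for products
   whose cross term is O(d) * O(d).  With Cauchy-Schwarz this gives
   |g(x) - g(x* )| <= |grad g(x)| delta + K delta^2 at every point of X, and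
   Minkowski's inequality in R^N together with sum_x |grad g(x)|^2 = 1 yields
   ||g(X) - g(X* )|| <= delta + K sqrt(N) delta^2. *)

From HB Require Import structures.
From mathcomp Require Import all_boot all_order all_algebra.
From mathcomp Require Import reals.
From mathcomp Require Import mpoly.
From mathcomp Require Import ring lra.
Set Implicit Arguments. Unset Strict Implicit. Unset Printing Implicit Defensive.
Import Order.TTheory GRing.Theory Num.Theory.
Local Open Scope ring_scope.

Section EuclideanNorm.
Variables (R : rcfType) (n : nat).
Implicit Types (u v : 'I_n -> R).

Lemma enorm_ge0 v : 0 <= enorm v.
Proof. exact: sqrtr_ge0. Qed.

Lemma sqr_enorm v : enorm v ^+ 2 = \sum_(j < n) v j ^+ 2.
Proof. by rewrite sqr_sqrtr // sumr_ge0 // => j _; exact: sqr_ge0. Qed.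

Lemma normr_le_enorm v j : `|v j| <= enorm v.
Proof.
rewrite -ler_sqr ?nnegrE ?enorm_ge0 // real_normK ?num_real // sqr_enorm.
by rewrite (bigD1 j) //= lerDl sumr_ge0 // => i _; exact: sqr_ge0.
Qed.

Lemma ler_enorm u v : (forall j, `|u j| <= v j) -> enorm u <= enorm v.
Proof.
move=> le_uv; rewrite ler_sqrt ?sumr_ge0 // => [|j _]; last exact: sqr_ge0.
apply: ler_sum => j _; rewrite -real_normK ?num_real //.
by rewrite ler_sqr ?nnegrE // (le_trans _ (le_uv j)).
Qed.

Lemma enormZ c v : enorm (fun j => c * v j) = `|c| * enorm v.
Proof.
rewrite -sqrtr_sqr -sqrtrM ?sqr_ge0 // mulr_sumr.
by congr Num.sqrt; apply: eq_bigr => j _; rewrite exprMn.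
Qed.

Lemma enorm_cst c : enorm (fun _ : 'I_n => c) = `|c| * Num.sqrt (n%:R : R).
Proof.
by rewrite /enorm sumr_const card_ord -[_ *+ n]mulr_natr sqrtrM ?sqr_ge0 // sqrtr_sqr.
Qed.

(* Summing [2 ab <= a^2 + b^2] with [a = u_i v_j], [b = u_j v_i] over all [i, j]. *)
Lemma sqr_sum_mul_le u v :
  (\sum_(j < n) u j * v j) ^+ 2 <= (\sum_(j < n) u j ^+ 2) * (\sum_(j < n) v j ^+ 2).
Proof.
rewrite expr2 !big_distrlr /= -(@ler_pM2l _ 2) // [X in _ <= X]mulr_natl mulr2n.
rewrite [X in _ <= _ + X]exchange_big -big_split mulr_sumr /=.
apply: ler_sum => i _; rewrite -big_split mulr_sumr /=.
apply: ler_sum => j _; rewrite -subr_ge0.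
by rewrite (_ : _ - _ = (u i * v j - u j * v i) ^+ 2) ?sqr_ge0 //; ring.
Qed.

Lemma cauchy_schwarz u v : `|\sum_(j < n) u j * v j| <= enorm u * enorm v.
Proof.
rewrite -ler_sqr ?nnegrE ?mulr_ge0 ?enorm_ge0 // real_normK ?num_real //.
by rewrite exprMn !sqr_enorm sqr_sum_mul_le.
Qed.

Lemma enormD u v : enorm (fun j => u j + v j) <= enorm u + enorm v.
Proof.
rewrite -ler_sqr ?nnegrE ?addr_ge0 ?enorm_ge0 // sqr_enorm.
under eq_bigr do rewrite sqrrD.
rewrite !big_split /= sqrrD !sqr_enorm.
have := le_trans (ler_norm _) (cauchy_schwarz u v); lra.
Qed.

End EuclideanNorm.

Lemma norm_sum_mul_le (R : numDomainType) (n : nat) (a h : 'I_n -> R) (d : R) :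
  (forall j, `|h j| <= d) -> `|\sum_(j < n) a j * h j| <= (\sum_(j < n) `|a j|) * d.
Proof.
move=> le_hd; rewrite mulr_suml; apply: le_trans (ler_norm_sum _ _ _) _.
by apply: ler_sum => j _; rewrite normrM ler_wpM2l.
Qed.

Section FirstOrderTaylor.
Variables (R : realType) (n : nat).
Implicit Types (p q : {mpoly R[n]}) (x y : 'I_n -> R).

Lemma gradpD p q x j : gradp (p + q) x j = gradp p x j + gradp q x j.
Proof. by rewrite /gradp mderivD mevalD. Qed.

Lemma gradpM p q x j :
  gradp (p * q) x j = q.@[x] * gradp p x j + p.@[x] * gradp q x j.
Proof. by rewrite /gradp mderivM mevalD !mevalM mulrC [_ * q^`M(j).@[x]]mulrC. Qed.

Lemma gradpC c x j : gradp c%:MP x j = 0.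
Proof. by rewrite /gradp mderivC meval0. Qed.

Lemma gradpX k x j : gradp 'X_k x j = (k == j)%:R.
Proof.
rewrite /gradp mderivX mevalZ mnm1E; have [<-|_] := eqVneq k j; last by rewrite mul0r.
by rewrite mevalX mul1r big1 // => i _; rewrite mnmBE subnn expr0.
Qed.

Definition taylor1_rem p x y : R :=
  p.@[y] - p.@[x] - \sum_(j < n) gradp p x j * (y j - x j).

Lemma taylor1_remD p q x y :
  taylor1_rem (p + q) x y = taylor1_rem p x y + taylor1_rem q x y.
Proof.
rewrite /taylor1_rem !mevalD.
under eq_bigr do rewrite gradpD mulrDl.
rewrite big_split /=; ring.
Qed.

Lemma taylor1_remM p q x y :
  taylor1_rem (p * q) x y = q.@[x] * taylor1_rem p x y + p.@[x] * taylor1_rem q x y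
    + (p.@[y] - p.@[x]) * (q.@[y] - q.@[x]).
Proof.
rewrite /taylor1_rem !mevalM.
under eq_bigr do rewrite gradpM mulrDl -!mulrA.
rewrite big_split /= -!mulr_sumr; ring.
Qed.

Lemma taylor1_remC c x y : taylor1_rem c%:MP x y = 0.
Proof.
rewrite /taylor1_rem !mevalC big1 => [|j _]; last by rewrite gradpC mul0r.
by rewrite !subrr.
Qed.

Lemma taylor1_remX k x y : taylor1_rem 'X_k x y = 0.
Proof.
rewrite /taylor1_rem !mevalXU (bigD1 k) //= big1 => [|j /negbTE nkj]; last first.
  by rewrite gradpX eq_sym nkj mul0r.
by rewrite gradpX eqxx mul1r addr0 subrr.
Qed.

(* Restricting to [d <= 1] lets every higher power of [d] be absorbed into [d ^+ 2]. *)
Definition quadratic_rem_at x p : Prop := exists2 C : R, 0 <= C &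
  forall y d, 0 <= d -> d <= 1 -> (forall j, `|y j - x j| <= d) ->
    `|taylor1_rem p x y| <= C * d ^+ 2.

Lemma quadratic_rem_lipschitz x p : quadratic_rem_at x p ->
  exists2 B : R, 0 <= B &
    forall y d, 0 <= d -> d <= 1 -> (forall j, `|y j - x j| <= d) ->
      `|p.@[y] - p.@[x]| <= B * d.
Proof.
case=> C C0 remC; exists (\sum_(j < n) `|gradp p x j| + C).
  by rewrite addr_ge0 ?sumr_ge0.
move=> y d d0 d1 near; have rem := remC y d d0 d1 near.
have lin := norm_sum_mul_le (gradp p x) near.
have dd : C * d ^+ 2 <= C * d by rewrite ler_wpM2l // expr2 ler_piMl.
have := lerB_dist (p.@[y] - p.@[x]) (\sum_(j < n) gradp p x j * (y j - x j)).
by rewrite /taylor1_rem mulrDl in rem *; lra.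
Qed.

Lemma quadratic_remD x p q :
  quadratic_rem_at x p -> quadratic_rem_at x q -> quadratic_rem_at x (p + q).
Proof.
move=> [Cp Cp0 remp] [Cq Cq0 remq]; exists (Cp + Cq); first exact: addr_ge0.
move=> y d d0 d1 near; rewrite taylor1_remD mulrDl.
by apply: le_trans (ler_normD _ _) _; rewrite lerD ?remp ?remq.
Qed.

Lemma quadratic_remM x p q :
  quadratic_rem_at x p -> quadratic_rem_at x q -> quadratic_rem_at x (p * q).
Proof.
move=> hp hq; have [Bp Bp0 lipp] := quadratic_rem_lipschitz hp.
have [Bq Bq0 lipq] := quadratic_rem_lipschitz hq.
case: hp hq => [Cp Cp0 remp] [Cq Cq0 remq].
exists (`|q.@[x]| * Cp + `|p.@[x]| * Cq + Bp * Bq); first by rewrite !addr_ge0 ?mulr_ge0.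
move=> y d d0 d1 near; rewrite taylor1_remM 2![_ * d ^+ 2]mulrDl.
apply: le_trans (ler_normD _ _) _; apply: lerD.
  apply: le_trans (ler_normD _ _) _.
  by apply: lerD; rewrite normrM -mulrA ler_wpM2l ?remp ?remq.
by rewrite normrM expr2 mulrACA ler_pM ?lipp ?lipq.
Qed.

Lemma quadratic_remC x c : quadratic_rem_at x c%:MP.
Proof. by exists 0 => // y d *; rewrite taylor1_remC normr0 mul0r. Qed.

Lemma quadratic_remX x k : quadratic_rem_at x 'X_k.
Proof. by exists 0 => // y d *; rewrite taylor1_remX normr0 mul0r. Qed.

Lemma quadratic_rem_mpoly x p : quadratic_rem_at x p.
Proof.
elim/mpolyind: p => [|c m p _ _ IHp]; first by rewrite -mpolyC0; exact: quadratic_remC.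
apply: quadratic_remD IHp; rewrite -mul_mpolyC mpolyXE_id.
apply: quadratic_remM; first exact: quadratic_remC.
elim/big_ind: _ => [||i _]; first by rewrite -mpolyC1; exact: quadratic_remC.
  exact: quadratic_remM.
elim: (m i) => [|k IHk]; first by rewrite expr0 -mpolyC1; exact: quadratic_remC.
by rewrite exprS; apply: quadratic_remM IHk; exact: quadratic_remX.
Qed.

End FirstOrderTaylor.

Lemma meval_dist_le (R : realType) (n : nat) (p : {mpoly R[n]}) (x : 'I_n -> R) :
  exists2 K : R, 0 <= K &
    forall y d, 0 <= d -> d <= 1 -> enorm (fun j => y j - x j) <= d ->
      `|p.@[y] - p.@[x]| <= enorm (gradp p x) * d + K * d ^+ 2.
Proof.
have [K K0 remK] := quadratic_rem_mpoly x p; exists K => // y d d0 d1 near.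
have rem := remK y d d0 d1 (fun j => le_trans (normr_le_enorm _ j) near).
have lin : `|\sum_(j < n) gradp p x j * (y j - x j)| <= enorm (gradp p x) * d.
  exact: le_trans (cauchy_schwarz _ _) (ler_wpM2l (enorm_ge0 _) near).
have := lerB_dist (p.@[y] - p.@[x]) (\sum_(j < n) gradp p x j * (y j - x j)).
by rewrite /taylor1_rem in rem; lra.
Qed.

Lemma meval_dist_le_uniform (R : realType) (n N : nat) (p : {mpoly R[n]})
    (X : 'I_N -> 'I_n -> R) :
  exists2 K : R, 0 <= K &
    forall i y d, 0 <= d -> d <= 1 -> enorm (fun j => y j - X i j) <= d ->
      `|p.@[y] - p.@[X i]| <= enorm (gradp p (X i)) * d + K * d ^+ 2.
Proof.
have [C C0 bound] := fin_all_exists2 (fun i => meval_dist_le p (X i)).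
exists (\sum_(i < N) C i) => [|i y d d0 d1 near]; first exact: sumr_ge0.
apply: le_trans (bound i y d d0 d1 near) _; rewrite lerD2l ler_wpM2r ?sqr_ge0 //.
by rewrite (bigD1 i) //= lerDl sumr_ge0.
Qed.

Lemma pert_ge0 (R : realType) (n N : nat) (X Xs : 'I_N -> 'I_n -> R) :
  0 <= pert X Xs.
Proof.
rewrite /pert; elim/big_ind: _ => // [a b a0 _|i _]; last exact: enorm_ge0.
by rewrite le_max a0.
Qed.

Lemma enorm_le_pert (R : realType) (n N : nat) (X Xs : 'I_N -> 'I_n -> R) i :
  enorm (fun j => Xs i j - X i j) <= pert X Xs.
Proof. by rewrite /pert (bigD1 i) //= le_max lexx. Qed.

Lemma ngnormE (R : realType) (n N : nat) (g : {mpoly R[n]}) (X : 'I_N -> 'I_n -> R) :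
  ngnorm g X = enorm (fun i => enorm (gradp g (X i))).
Proof. by congr Num.sqrt; apply: eq_bigr => i _; rewrite sqr_enorm. Qed.

Theorem proposition3 (R : realType) (n N : nat) (g : {mpoly R[n]})
  (X : 'I_N -> 'I_n -> R) :
  ngnorm g X = 1 ->
  forall eps : R, 0 < eps ->
  exists2 eta : R, 0 < eta &
    forall Xs : 'I_N -> 'I_n -> R,
      pert X Xs <= eta ->
      enorm (fun i => evalpts g X i - evalpts g Xs i)
        <= pert X Xs + eps * pert X Xs.
Proof.
move=> unit_grad eps eps0.
have [K K0 bound] := meval_dist_le_uniform g X.
pose c := K * Num.sqrt (N%:R : R).
have c0 : 0 <= c by rewrite mulr_ge0 ?sqrtr_ge0.
exists (Num.min 1 (eps / (c + 1))); first by rewrite lt_min ltr01 divr_gt0 ?ltr_wpDl.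
move=> Xs; rewrite le_min => /andP[d1 d_eta].
have d0 := pert_ge0 X Xs; set d := pert X Xs in d0 d1 d_eta *.
have cd : c * d <= eps.
  by move: d_eta; rewrite ler_pdivlMr ?ltr_wpDl // mulrDr mulr1; lra.
have pointwise i : `|evalpts g X i - evalpts g Xs i|
    <= d * enorm (gradp g (X i)) + K * d ^+ 2.
  by rewrite distrC mulrC; apply: bound; rewrite ?enorm_le_pert.
apply: le_trans (ler_enorm pointwise) _; apply: le_trans (enormD _ _) _.
rewrite enormZ enorm_cst -ngnormE unit_grad mulr1 !ger0_norm ?mulr_ge0 ?sqr_ge0 //.
by rewrite lerD2l mulrAC -/c expr2 mulrA ler_wpM2r.
Qed.
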